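(* Let $G=(V,E)$ be a connected (finite, simple) graph and let $\mathcal{F}$ be a maximum induced forest of $G$ with vertex set $F$. Then there exists a vertex set $A\subseteq V\setminus F$ with $|A|\le 2|F|-2$ such that $G[F\cup A]$ is connected.
   Context: A maximum induced forest of $G$ is an induced subgraph $G[F]$ that is a forest and has the maximum possible number of vertices among all induced forests of $G$. *)

From mathcomp Require Import all_boot.
Set Implicit Arguments. Unset Strict Implicit. Unset Printing Implicit Defensive.

Definition simple_graph (V : finType) (e : rel V) : Prop :=
  symmetric e /\ irreflexive e.

Definition induced_connected (V : finType) (e : rel V) (S : {set V}) : Prop :=
  forall x y, x \in S -> y \in S ->
    exists p : seq V, [/\ path e x p, last x p = y & all (fun z => z \in S) p].

Definition connected_graph (V : finType) (e : rel V) : Prop :=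
  induced_connected e [set: V].

Definition induced_forest (V : finType) (e : rel V) (F : {set V}) : Prop :=
  ~ exists c : seq V,
      [/\ 3 <= size c, uniq c, all (fun z => z \in F) c & cycle e c].

Definition maximum_induced_forest (V : finType) (e : rel V) (F : {set V}) : Prop :=
  induced_forest e F /\
  forall F' : {set V}, induced_forest e F' -> #|F'| <= #|F|.

From mathcomp Require Import all_boot zify.
From Stdlib Require Import Classical_Prop.
Set Implicit Arguments. Unset Strict Implicit. Unset Printing Implicit Defensive.

(* Since F is a maximal induced forest, every vertex outside F has a
   neighbour in F.  Hence, from a connected set C meeting F, some z in F \ C
   is reached by a walk of length at most 3: if a shortest walk c, v1, v2, ...
   from C to F \ C were longer, v1 and v2 would lie outside F, and a
   neighbour of v2 in F would yield a shorter one.  Adding such a walk to C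
   adds at most two vertices outside F and the new vertex z of F, so starting
   from one vertex of F the invariant |C \ F| + 2 <= 2 |C /\ F| holds until
   C contains F. *)

Section Walks.
Variables (V : finType) (e : rel V).

Definition walk_in (S : {set V}) x y :=
  exists p : seq V, [/\ path e x p, last x p = y & all (fun z => z \in S) p].

Lemma walk_in_refl (S : {set V}) x : walk_in S x x.
Proof. by exists [::]. Qed.

Lemma walk_in_edge (S : {set V}) x y : e x y -> y \in S -> walk_in S x y.
Proof. by move=> exy yS; exists [:: y]; rewrite /= exy yS. Qed.

Lemma walk_in_trans (S : {set V}) x y z :
  walk_in S x y -> walk_in S y z -> walk_in S x z.
Proof.
move=> [p [p_path p_last p_in]] [q [q_path q_last q_in]]; exists (p ++ q).
by rewrite cat_path last_cat p_last p_path q_path q_last all_cat p_in q_in.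
Qed.

Lemma walk_in_sub (S T : {set V}) x y :
  S \subset T -> walk_in S x y -> walk_in T x y.
Proof.
move=> /subsetP sST [p [p_path p_last p_in]]; exists p; split=> //.
exact: sub_all p_in.
Qed.

Lemma induced_connected1 x : induced_connected e [set x].
Proof. by move=> y z /set1P -> /set1P ->; apply: walk_in_refl. Qed.

Hypothesis e_sym : symmetric e.

Lemma induced_connectedU1 (C : {set V}) c v :
  induced_connected e C -> c \in C -> e c v -> induced_connected e (v |: C).
Proof.
move=> C_conn cC ecv.
have sCvC : C \subset v |: C by apply/subsetP => y yC; rewrite setU1r.
have to_c u : u \in v |: C -> walk_in (v |: C) u c.
  case/setU1P => [->|uC]; first by apply: walk_in_edge; rewrite 1?e_sym ?setU1r.
  exact: walk_in_sub sCvC (C_conn u c uC cC).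
have from_c u : u \in v |: C -> walk_in (v |: C) c u.
  case/setU1P => [->|uC]; first by apply: walk_in_edge; rewrite ?setU11.
  exact: walk_in_sub sCvC (C_conn c u cC uC).
by move=> x y xvC yvC; apply: walk_in_trans (to_c x xvC) (from_c y yvC).
Qed.

Lemma induced_connected_path (C : {set V}) c p :
  induced_connected e C -> c \in C -> path e c p ->
  induced_connected e (C :|: [set:: p]).
Proof.
elim: p C c => [|v p IHp] C c C_conn cC /=; first by rewrite setU0.
case/andP=> ecv v_path; rewrite set_cons setUCA setUA.
by apply: IHp v_path; [apply: induced_connectedU1 ecv | rewrite setU11].
Qed.

End Walks.

Lemma maximum_induced_forest_dominating (V : finType) (e : rel V) (F : {set V}) :
  irreflexive e -> maximum_induced_forest e F ->
  forall v, v \notin F -> exists2 w, w \in F & e v w.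
Proof.
move=> e_irr [F_forest F_max] v vF.
have : ~ induced_forest e (v |: F).
  by move=> /F_max; rewrite cardsU1 vF ltnn.
case/NNPP=> c [c_size c_uniq c_in c_cycle].
have vc : v \in c.
  apply: contraT => vNc; case: F_forest; exists c; split=> //.
  apply/allP => z zc; have /setU1P[zv|//] := allP c_in z zc.
  by rewrite -zv zc in vNc.
have e_next := next_cycle c_cycle vc.
exists (next c v) => //.
have /setU1P[nextv|//] := allP c_in (next c v) (etrans (mem_next c v) vc).
by rewrite nextv e_irr in e_next.
Qed.

Section Growth.
Variables (V : finType) (e : rel V) (F : {set V}).
Hypothesis e_sym : symmetric e.
Hypothesis F_dom : forall v, v \notin F -> exists2 w, w \in F & e v w.

Lemma short_walk_to_setD (C : {set V}) c p :
  c \in C -> path e c p -> last c p \in F :\: C ->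
  exists c0 q z, [/\ c0 \in C, z \in F :\: C, path e c0 (rcons q z) & size q <= 2].
Proof.
move: {2}(size p) (leqnn (size p)) => n.
elim: n c p => [|n IHn] c [|v1 p] //= p_size cC; try by move=> _; rewrite inE cC.
case/andP=> ecv1 v1_path p_last.
have [v1C|v1C] := boolP (v1 \in C); first exact: IHn v1_path p_last.
have [v1F|v1F] := boolP (v1 \in F).
  by exists c, [::], v1; rewrite /= inE v1C v1F ecv1.
case: p p_size v1_path p_last => [|v2 p] p_size /=.
  by move=> _; rewrite inE (negbTE v1F) andbF.
case/andP=> ev1v2 v2_path p_last.
have [v2C|v2C] := boolP (v2 \in C); first exact: IHn (ltnW p_size) v2C v2_path p_last.
have [v2F|v2F] := boolP (v2 \in F).
  by exists c, [:: v1], v2; rewrite /= inE v2C v2F ecv1 ev1v2.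
have [w wF ev2w] := F_dom v2F.
have [wC|wC] := boolP (w \in C).
  (* the walk w, v2, ... from C is one step shorter *)
  by apply: (IHn w (v2 :: p)) => //=; rewrite 1?e_sym ?ev2w.
by exists c, [:: v1; v2], w; rewrite /= inE wC wF ecv1 ev1v2 ev2w.
Qed.

Hypothesis G_conn : connected_graph e.

Lemma induced_connected_grow (C : {set V}) :
  induced_connected e C -> 0 < #|C :&: F| -> ~~ (F \subset C) ->
  exists C' : {set V}, [/\ induced_connected e C',
    #|C' :\: F| <= #|C :\: F| + 2, #|C :&: F| < #|C' :&: F|
    & #|F :\: C'| < #|F :\: C|].
Proof.
move=> C_conn /card_gt0P[x xCF] /subsetPn[y yF yNC].
have [xC xF] := setIP xCF.
have [p [p_path p_last _]] := G_conn (in_setT x) (in_setT y).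
have yFC : last x p \in F :\: C by rewrite p_last inE yNC yF.
have [c [q [z [cC zFC zq_path q_size]]]] := short_walk_to_setD xC p_path yFC.
have [zF zNC] := setDP zFC.
have zC' : z \in C :|: [set:: rcons q z] by rewrite !inE mem_rcons mem_head orbT.
exists (C :|: [set:: rcons q z]); split.
- exact: induced_connected_path cC zq_path.
- have out_sub : (C :|: [set:: rcons q z]) :\: F \subset (C :\: F) :|: [set:: q].
    apply/subsetP => u; rewrite !inE mem_rcons inE.
    case: (u =P z) => [->|_] /=; first by rewrite zF.
    by case: (u \in F) (u \in C) (u \in q).
  have card_q : #|[set:: q]| <= 2 by rewrite cardsE (leq_trans (card_size q)).
  apply: leq_trans (subset_leq_card out_sub) _.
  by rewrite cardsU (leq_trans (leq_subr _ _)) ?leq_add2l.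
- apply: proper_card; apply/properP; split; first exact: setSI (subsetUl _ _).
  by exists z; rewrite in_setI ?zC' ?zF ?(negbTE zNC).
- apply: proper_card; apply/properP; split; first exact: setDS (subsetUl _ _).
  by exists z; rewrite in_setD ?zC' ?zNC.
Qed.

Lemma induced_connected_cover (C : {set V}) :
  induced_connected e C -> #|C :\: F| + 2 <= 2 * #|C :&: F| ->
  exists C' : {set V}, [/\ F \subset C', induced_connected e C'
    & #|C' :\: F| + 2 <= 2 * #|C' :&: F|].
Proof.
move: {2}#|F :\: C| (leqnn #|F :\: C|) => n.
elim: n C => [|n IHn] C F_size C_conn C_card.
  by exists C; split=> //; rewrite -setD_eq0 -cards_eq0 -leqn0.
have [FC|FNC] := boolP (F \subset C); first by exists C.
have CF_gt0 : 0 < #|C :&: F|.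
  by rewrite lt0n; apply: contraTneq C_card => ->; rewrite muln0 addn2.
have [C' [C'_conn C'_out C'_in C'_size]] := induced_connected_grow C_conn CF_gt0 FNC.
apply: IHn C'_conn _; first by rewrite -ltnS (leq_trans C'_size).
move: C_card C'_out C'_in.
move: #|C :\: F| #|C :&: F| #|C' :\: F| #|C' :&: F| => out in' out' in''; lia.
Qed.

End Growth.

Theorem lemma3 (V : finType) (e : rel V) (F : {set V}) :
  simple_graph e -> connected_graph e -> maximum_induced_forest e F ->
  exists A : {set V},
    [/\ A \subset ~: F, #|A| <= 2 * #|F| - 2 & induced_connected e (F :|: A)].
Proof.
move=> [e_sym e_irr] G_conn F_mif.
have F_dom := maximum_induced_forest_dominating e_irr F_mif.
have [->|[f fF]] := set_0Vmem F.
  by exists set0; split; rewrite ?sub0set ?cards0 // setU0 => x y; rewrite inE.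
have f_card : #|[set f] :\: F| + 2 <= 2 * #|[set f] :&: F|.
  have /eqP-> : [set f] :\: F == set0 by rewrite setD_eq0 sub1set.
  by rewrite cards0 (setIidPl _) ?sub1set // cards1.
have [C [FC C_conn C_card]] :=
  induced_connected_cover e_sym F_dom G_conn (induced_connected1 e (x := f)) f_card.
exists (C :\: F); split.
- by apply/subsetP => u; rewrite !inE => /andP[].
- by move: C_card; rewrite (setIidPr FC); move: #|C :\: F| #|F| => out in'; lia.
- by rewrite -{1}(setIidPr FC) setID.
Qed.
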